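(* $T^2\Lambda=\Xi_2\oplus(l-\psi)T\Lambda$ (internal direct sum).
   Context: Let $l$ be an odd prime, $\Lambda=\mathbb{Z}_l[[T]]$, and let $\psi$ be the continuous $\mathbb{Z}_l$-algebra endomorphism of $\Lambda$ with $\psi(T)=(1+T)^l-1$; $(l-\psi)x=lx-\psi(x)$. Let $\Lambda_\wedge=\{\sum_{k\in\mathbb{Z}}x_kT^k: x_k\in\mathbb{Z}_l,\ x_k\to0 \text{ as } k\to-\infty\}$, $\Xi=\{\sum_k x_kT^k\in\Lambda_\wedge: x_k=0 \text{ whenever } l\mid k\}$, and for $s\in\mathbb{Z}$, $\Xi_s=\{\sum_{k\ge s}x_kT^k\in\Xi\}$. Thus $\Xi_2$ consists of power series $\sum_{k\ge2,\,l\nmid k}x_kT^k\in\Lambda$. *)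

From HB Require Import structures.
From mathcomp Require Import all_boot all_order all_algebra.
Set Implicit Arguments. Unset Strict Implicit. Unset Printing Implicit Defensive.
Import Order.TTheory GRing.Theory Num.Theory.
Local Open Scope ring_scope.

(* ---------- l-adic integers Z_l as the inverse limit lim Z/l^n Z ----------
   An element of Z_l is represented by a coherent sequence of integers
   x : nat -> int with x (n+1) = x n (mod l^n); two representatives denote
   the same l-adic integer iff x n = y n (mod l^n) for every n. *)
Definition zl_coherent (l : nat) (x : nat -> int) : Prop :=
  forall n : nat, (x n.+1 == x n %[mod (l ^ n)%N%:Z])%Z.

Definition zl_eq (l : nat) (x y : nat -> int) : Prop :=
  forall n : nat, (x n == y n %[mod (l ^ n)%N%:Z])%Z.

(* ---------- Lambda = Z_l[[T]] ----------
   A power series F has k-th coefficient F k : nat -> int (an element of Z_l). *)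
Definition pser := nat -> nat -> int.

Definition is_series (l : nat) (F : pser) : Prop :=
  forall k : nat, zl_coherent l (F k).

Definition ps_eq (l : nat) (F G : pser) : Prop :=
  forall k : nat, zl_eq l (F k) (G k).

Definition ps0 : pser := fun _ _ => 0.
Definition ps_add (F G : pser) : pser := fun k n => F k n + G k n.
Definition ps_sub (F G : pser) : pser := fun k n => F k n - G k n.
Definition ps_scale (c : int) (F : pser) : pser := fun k n => c * F k n.

Definition ps_mulT (F : pser) : pser :=
  fun k n => if k is k'.+1 then F k' n else 0.

Definition psi_coef (l j k : nat) : int :=
  ((('X + 1) ^+ l - 1) ^+ j : {poly int})`_k.

(* psi(F) = F((1+T)^l - 1); since (1+T)^l - 1 has no constant term,
   the k-th coefficient is sum_{j <= k} F_j * [T^k]((1+T)^l-1)^j. *)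
Definition ps_psi (l : nat) (F : pser) : pser :=
  fun k n => \sum_(j < k.+1) psi_coef l j k * F j n.

Definition l_minus_psi (l : nat) (F : pser) : pser :=
  ps_sub (ps_scale l%:Z F) (ps_psi l F).

Definition in_T2Lambda (l : nat) (F : pser) : Prop :=
  exists G, is_series l G /\ ps_eq l F (ps_mulT (ps_mulT G)).

Definition in_Xi2 (l : nat) (F : pser) : Prop :=
  is_series l F /\
  forall k : nat, ((k < 2)%N || (l %| k)%N) -> zl_eq l (F k) (fun _ => 0).

From HB Require Import structures.
From mathcomp Require Import all_boot all_order all_algebra ring.
Set Implicit Arguments. Unset Strict Implicit. Unset Printing Implicit Defensive.
Import Order.TTheory GRing.Theory Num.Theory.
Local Open Scope ring_scope.

(* All operations on Lambda act "level by level": at level n a series is a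
   sequence of integers v : nat -> int, considered modulo l^n.  At a fixed
   level, the k-th coefficient of (l - psi)(T v) is an integer linear form
   [lmpT v k] in v_0, ..., v_(k-1).  Since psi(T)^(j+1) = T^(l(j+1)) mod l,
   its coefficient at k = l(j+1) has the shape
       lmpT v (l(j+1)) = l * quoT v j - v j                           (key)
   for another integer linear form quoT.  Consequently:
   - kernel: if every lmpT v (l(j+1)) is divisible by l^n, then so is every
     v_i (induction on the l-adic valuation), which gives Xi_2 cap (l-psi)TL = 0;
   - existence: the equations lmpT v (l(j+1)) = d_j (mod l^n) are solved by
     the successive approximation v <- l * B v - d, whose t-th iterate is
     correct modulo l^t and which depends l-adically continuously on d;
     solving with d_j = f_(l(j+1)) makes f - (l-psi)(T g) lie in Xi_2.
   The argument only uses that l is prime, not that it is odd. *)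

Definition lform (m : nat) (a v : nat -> int) : int := \sum_(i < m) a i * v i.

Lemma lformB m a v w :
  lform m a (fun i => v i - w i) = lform m a v - lform m a w.
Proof. by rewrite /lform -sumrB; apply: eq_bigr => i _; rewrite mulrBr. Qed.

Lemma lform_dvd (M : int) m a v :
  (forall i, (M %| v i)%Z) -> (M %| lform m a v)%Z.
Proof. by move=> Mv; apply: rpred_sum => i _; apply: dvdz_mull. Qed.

Lemma lform_sub_delta m (c : int) a v j : (j < m)%N ->
  lform m (fun i => c * a i - (i == j)%:R) v = c * lform m a v - v j.
Proof.
move=> jm; have -> : v j = \sum_(i < m) (i == j :> nat)%:R * v i.
  rewrite (bigD1 (Ordinal jm)) //= eqxx mul1r big1 ?addr0 // => i.
  by rewrite -val_eqE /= => /negbTE ->; rewrite mul0r.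
rewrite /lform mulr_sumr -sumrB; apply: eq_bigr => i _.
by rewrite mulrBl mulrA.
Qed.

(* The coefficients of psi(T)^j = ((1+T)^l - 1)^j: modulo l this power is
   T^(lj), by the Frobenius endomorphism of F_l[T]. *)
Lemma psi_coef_mod l (hl : prime l) j k :
  (l%:Z %| psi_coef l j k - (k == (l * j)%N)%:R)%Z.
Proof.
rewrite (dvdz_pcharf (pchar_Fp hl)) rmorphB /= -subr_eq0 subr0.
rewrite /psi_coef -(coef_map (intr : int -> 'F_l)) /= rmorphXn rmorphB /=.
rewrite rmorphXn rmorphD /= map_polyX !rmorph1.
have chp : l \in [pchar {poly 'F_l}] by rewrite pchar_poly pchar_Fp.
rewrite -(pFrobenius_autE chp) pFrobenius_autD_comm; last exact: commr1.
rewrite !pFrobenius_autE expr1n addrK -exprM coefXn.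
by case: (k == _); rewrite ?rmorph1 ?rmorph0 subrr.
Qed.

Lemma coef1_XaddC1 n : (('X + 1) ^+ n : {poly int})`_1 = n%:R.
Proof.
suff : (('X + 1) ^+ n : {poly int})`_0 = 1 /\
        (('X + 1) ^+ n : {poly int})`_1 = n%:R by case.
elim: n => [|n [c0 c1]]; first by rewrite expr0 !coefC.
rewrite exprSr mulrDr mulr1 !coefD !coefMX /= c0 c1.
by rewrite add0r -addn1 natrD addrC.
Qed.

Lemma psi_coef11 l : psi_coef l 1 1 = l%:Z.
Proof. by rewrite /psi_coef expr1 coefB coef1_XaddC1 coefC subr0 natz. Qed.

Section LevelWise.
Variable l : nat.
Hypothesis hl : prime l.

(* Coefficient of v_i in the k-th coefficient of (l - psi)(T v). *)
Definition lmp_coef (k i : nat) : int :=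
  (k == i.+1)%:R * l%:Z - psi_coef l i.+1 k.

Definition lmpT (v : nat -> int) (k : nat) : int := lform k (lmp_coef k) v.

Lemma l_minus_psiE g k n :
  l_minus_psi l (ps_mulT g) k n = lmpT (fun i => g i n) k.
Proof.
rewrite /l_minus_psi /ps_sub /ps_scale /ps_psi /lmpT /lform big_ord_recl /=.
rewrite mulr0 add0r.
under [in RHS]eq_bigr do rewrite mulrBl.
rewrite sumrB; congr (_ - _); case: k => [|k]; first by rewrite big_ord0 mulr0.
rewrite big_ord_recr /= eqxx mul1r mulrC big1 ?add0r // => i _.
by rewrite eqSS eq_sym ltn_eqF // !mul0r.
Qed.

Lemma lmpT0 v : lmpT v 0 = 0.
Proof. by rewrite /lmpT /lform big_ord0. Qed.

Lemma lmpT1 v : lmpT v 1 = 0.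
Proof. by rewrite /lmpT /lform big_ord1 /lmp_coef psi_coef11 mul1r subrr mul0r. Qed.

Lemma lmp_coef_mod j i :
  (l%:Z %| lmp_coef (l * j.+1) i + (i == j)%:R)%Z.
Proof.
have l0 : (l == 0%N) = false by apply/negbTE; rewrite -lt0n prime_gt0.
rewrite /lmp_coef -addrA rpredD ?dvdz_mull // addrC -opprB rpredN.
by have := psi_coef_mod hl i.+1 (l * j.+1); rewrite eqn_mul2l eqSS l0 eq_sym.
Qed.

Definition quo_coef (j i : nat) : int :=
  ((lmp_coef (l * j.+1) i + (i == j)%:R) %/ l%:Z)%Z.

Definition quoT (v : nat -> int) (j : nat) : int :=
  lform (l * j.+1) (quo_coef j) v.

Lemma lmpT_multiple v j : lmpT v (l * j.+1) = l%:Z * quoT v j - v j.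
Proof.
have jlt : (j < l * j.+1)%N by rewrite (leq_trans (ltnSn j)) ?leq_pmull ?prime_gt0.
rewrite -lform_sub_delta // /lmpT; apply: eq_bigr => i _.
by rewrite /quo_coef [l%:Z * _]mulrC divzK ?lmp_coef_mod // addrK.
Qed.

Lemma lmpT_kernel n v :
  (forall j, ((l%:Z) ^+ n %| lmpT v (l * j.+1))%Z) ->
  forall i, ((l%:Z) ^+ n %| v i)%Z.
Proof.
move=> vanish.
suff val_ge t : (t <= n)%N -> forall i, ((l%:Z) ^+ t %| v i)%Z by exact: val_ge.
elim: t => [|t IH] tn i; first by rewrite expr0 dvd1z.
have -> : v i = l%:Z * quoT v i - lmpT v (l * i.+1) by rewrite lmpT_multiple opprB addrC subrK.
apply: rpredB; first by rewrite exprS dvdz_mul // lform_dvd // => k; apply: IH; apply: ltnW.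
by apply: dvdz_trans (vanish i); rewrite dvdz_exp2l.
Qed.

Fixpoint approx (d : nat -> int) (t : nat) : nat -> int :=
  if t is t'.+1 then fun j => l%:Z * quoT (approx d t') j - d j else fun _ => 0.

Lemma approx_residual d t j :
  lmpT (approx d t) (l * j.+1) = d j + (approx d t.+1 j - approx d t j).
Proof. by rewrite lmpT_multiple /= addrA [d j + _]addrC subrK. Qed.

Lemma approx_step d t j : ((l%:Z) ^+ t %| approx d t.+1 j - approx d t j)%Z.
Proof.
elim: t j => [|t IH] j; first by rewrite expr0 dvd1z.
rewrite /= opprB addrA subrK -mulrBr /quoT -lformB exprS.
by rewrite dvdz_mul // lform_dvd.
Qed.

Lemma approx_cont (M : int) d d' :
  (forall j, (M %| d' j - d j)%Z) -> forall t j, (M %| approx d' t j - approx d t j)%Z.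
Proof.
move=> dd; elim => [|t IH] j /=; first by rewrite subrr dvdz0.
rewrite opprD opprK addrACA -mulrBr /quoT -lformB rpredD ?dvdz_mull ?lform_dvd //.
by rewrite addrC -opprB rpredN.
Qed.

End LevelWise.

Lemma natz_exp l n : (l ^ n)%N%:Z = l%:Z ^+ n.
Proof. by rewrite -!natz natrX. Qed.

Lemma zl_eqP l x y : zl_eq l x y <-> forall n, ((l%:Z) ^+ n %| x n - y n)%Z.
Proof. by split=> h n; have := h n; rewrite eqz_mod_dvd natz_exp. Qed.

Lemma zl_coherentP l x :
  zl_coherent l x <-> forall n, ((l%:Z) ^+ n %| x n.+1 - x n)%Z.
Proof. by split=> h n; have := h n; rewrite eqz_mod_dvd natz_exp. Qed.

Section Series.
Variable l : nat.

Lemma series_eq F G : is_series l G -> ps_eq l F G -> is_series l F.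
Proof.
move=> Gs FG k; apply/zl_coherentP => n.
have /zl_eqP FGk := FG k; have /zl_coherentP Gk := Gs k.
have -> : F k n.+1 - F k n =
    (F k n.+1 - G k n.+1) + (G k n.+1 - G k n) - (F k n - G k n).
  by ring.
apply: rpredB; [apply: rpredD => // | exact: FGk].
by apply: dvdz_trans (FGk n.+1); rewrite dvdz_exp2l.
Qed.

Lemma series_sub F G : is_series l F -> is_series l G -> is_series l (ps_sub F G).
Proof.
move=> Fs Gs k; apply/zl_coherentP => n; have /zl_coherentP Fk := Fs k.
have /zl_coherentP Gk := Gs k.
have -> : ps_sub F G k n.+1 - ps_sub F G k n =
    (F k n.+1 - F k n) - (G k n.+1 - G k n) by rewrite /ps_sub; ring.
exact: rpredB.
Qed.

Lemma series_lmpT g : is_series l g -> is_series l (l_minus_psi l (ps_mulT g)).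
Proof.
move=> gs k; apply/zl_coherentP => n; rewrite !l_minus_psiE -lformB.
by apply: lform_dvd => i; have /zl_coherentP := gs i; apply.
Qed.

Lemma T2LambdaP F :
  in_T2Lambda l F <->
  [/\ is_series l F, zl_eq l (F 0%N) (fun _ => 0) & zl_eq l (F 1%N) (fun _ => 0)].
Proof.
split=> [[G [Gs FG]] | [Fs F0 F1]].
  have G2s : is_series l (ps_mulT (ps_mulT G)) by move=> [|[|k]] //= n; exact: Gs.
  by split; [exact: series_eq FG | exact: FG 0%N | exact: FG 1%N].
exists (fun k => F k.+2); split=> [k|]; first exact: Fs.
by move=> [|[|k]] //= n; exact: eqxx.
Qed.

Lemma Xi2_sub_T2Lambda x : in_Xi2 l x -> in_T2Lambda l x.
Proof.
by move=> [xs xXi]; apply/T2LambdaP; split; [exact: xs|exact: xXi 0%N isT|exact: xXi 1%N isT].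
Qed.

Lemma lmpT_sub_T2Lambda g : is_series l g -> in_T2Lambda l (l_minus_psi l (ps_mulT g)).
Proof.
move=> gs; apply/T2LambdaP; split; first exact: series_lmpT.
  by move=> n; rewrite l_minus_psiE lmpT0; exact: eqxx.
by move=> n; rewrite l_minus_psiE lmpT1; exact: eqxx.
Qed.

End Series.

Section Decomposition.
Variable l : nat.
Hypothesis hl : prime l.

Lemma Xi2_index k : ((k < 2)%N || (l %| k)%N) ->
  k = 0%N \/ k = 1%N \/ exists j, k = (l * j.+1)%N.
Proof.
case/orP=> [|/dvdnP [[|j] ->]]; last (by right; right; exists j; rewrite mulnC).
  by case: k => [|[|k]]; auto.
by left.
Qed.

Definition solution (f : pser) : pser :=
  fun j n => approx l (fun i => f (l * i.+1)%N n) n j.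

Lemma solution_series f : is_series l f -> is_series l (solution f).
Proof.
move=> fs j; apply/zl_coherentP => n; rewrite /solution.
set d' := fun i => f (l * i.+1)%N n.+1.
set h := approx l d' n j; set A := approx l d' n.+1 j; set B := approx l _ n j.
have -> : A - B = (A - h) + (h - B) by ring.
rewrite rpredD //; first exact: approx_step.
by apply: approx_cont => i; have /zl_coherentP := fs (l * i.+1)%N; apply.
Qed.

Lemma solution_spec f n j :
  ((l%:Z) ^+ n %| lmpT l (fun i => solution f i n) (l * j.+1) - f (l * j.+1)%N n)%Z.
Proof. by rewrite approx_residual // addrC addKr approx_step. Qed.

Lemma T2Lambda_decomp f : in_T2Lambda l f ->
  exists x g : pser, [/\ in_Xi2 l x, is_series l g &
    ps_eq l f (ps_add x (l_minus_psi l (ps_mulT g)))].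
Proof.
case/T2LambdaP=> fs /zl_eqP f0 /zl_eqP f1.
set g := solution f; have gs : is_series l g by exact: solution_series.
exists (ps_sub f (l_minus_psi l (ps_mulT g))), g; split=> //; last first.
  by move=> k n; rewrite /ps_add /ps_sub subrK; exact: eqxx.
split; first by apply: series_sub => //; exact: series_lmpT.
move=> k /Xi2_index [-> | [-> | [j ->]]]; apply/zl_eqP => n;
  rewrite /ps_sub l_minus_psiE subr0.
- by rewrite lmpT0 subr0; have := f0 n; rewrite subr0.
- by rewrite lmpT1 subr0; have := f1 n; rewrite subr0.
- by rewrite -opprB rpredN solution_spec.
Qed.

Lemma Xi2_cap_lmpT x g : in_Xi2 l x ->
  ps_eq l x (l_minus_psi l (ps_mulT g)) -> ps_eq l x ps0.
Proof.
move=> [_ xXi] xg.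
have xgn k n : ((l%:Z) ^+ n %| x k n - lmpT l (fun i => g i n) k)%Z.
  by have /zl_eqP := xg k; rewrite -(l_minus_psiE _ g); apply.
have g_small n : forall i, ((l%:Z) ^+ n %| g i n)%Z.
  apply: (@lmpT_kernel l hl n (fun i => g i n)) => j.
  have lj : ((l * j.+1 < 2)%N || (l %| l * j.+1)%N) by rewrite dvdn_mulr ?orbT.
  have /zl_eqP/(_ n) := xXi _ lj; rewrite subr0 => xj.
  by rewrite -[lmpT _ _ _](subKr (x (l * j.+1)%N n)) rpredB.
move=> k; apply/zl_eqP => n; rewrite subr0 -(subrK (lmpT l (fun i => g i n) k) (x k n)).
by rewrite rpredD ?xgn // lform_dvd.
Qed.

End Decomposition.

Theorem mainTheorem7 (l : nat) (hl : prime l) (hodd : odd l) :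
  (forall x : pser, in_Xi2 l x -> in_T2Lambda l x) /\
  (forall g : pser, is_series l g -> in_T2Lambda l (l_minus_psi l (ps_mulT g))) /\
  (forall f : pser, in_T2Lambda l f ->
     exists x g : pser, in_Xi2 l x /\ is_series l g /\
       ps_eq l f (ps_add x (l_minus_psi l (ps_mulT g)))) /\
  (forall x g : pser, in_Xi2 l x -> is_series l g ->
     ps_eq l x (l_minus_psi l (ps_mulT g)) -> ps_eq l x ps0).
Proof.
split; first exact: Xi2_sub_T2Lambda.
split; first exact: lmpT_sub_T2Lambda.
split.
  move=> f /(T2Lambda_decomp hl) [x [g [xXi gs fxg]]].
  by exists x, g.
by move=> x g xXi _; exact: Xi2_cap_lmpT.
Qed.
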